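(* Let $\kappa$ be an infinite cardinal and let $X$ be a strongly zero-dimensional space. Then $X$ is an $F_\kappa$-space if and only if its Stone–Čech compactification $\beta X$ is an $F_\kappa$-space.
   Context: A space is zero-dimensional if it has a base of clopen sets; a Tychonoff space $X$ is strongly zero-dimensional if $\beta X$ is zero-dimensional. For a zero-dimensional space $X$ and an open $U\subseteq X$, the ($X$-)type $\tau(U)$ is the least cardinal $\tau$ such that $U$ is a union of $\tau$ many clopen subsets of $X$. A zero-dimensional space is an $F_\kappa$-space if every open subset of type less than $\kappa$ is $C^*$-embedded (every bounded continuous real-valued function on it extends continuously to the whole space). *)

From Stdlib Require Import Reals List.
Open Scope R_scope.

Record topology (X : Type) := Topology {
  open : (X -> Prop) -> Prop;
  open_full : open (fun _ => True);
  open_inter : forall U V, open U -> open V -> open (fun x => U x /\ V x);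
  open_union : forall F : (X -> Prop) -> Prop,
      (forall U, F U -> open U) -> open (fun x => exists U, F U /\ U x)
}.
Arguments open {X} t _.

Definition closed {X} (T : topology X) (F : X -> Prop) : Prop :=
  open T (fun x => ~ F x).

Definition clopen {X} (T : topology X) (C : X -> Prop) : Prop :=
  open T C /\ closed T C.

Definition continuous {X Y} (TX : topology X) (TY : topology Y) (f : X -> Y) : Prop :=
  forall V, open TY V -> open TX (fun x => V (f x)).

Definition continuous_R {X} (T : topology X) (f : X -> R) : Prop :=
  forall W, open_set W -> open T (fun x => W (f x)).

(** Continuity of (the restriction to [U] of) a real-valued function,
    [U] carrying the subspace topology. *)
Definition continuous_R_on {X} (T : topology X) (U : X -> Prop) (f : X -> R) : Prop :=
  forall W, open_set W ->
    exists O, open T O /\ forall x, U x -> (W (f x) <-> O x).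

Definition C_star_embedded {X} (T : topology X) (U : X -> Prop) : Prop :=
  forall f : X -> R,
    continuous_R_on T U f ->
    (exists M, forall x, U x -> Rabs (f x) <= M) ->
    exists g : X -> R, continuous_R T g /\ forall x, U x -> g x = f x.

Definition zero_dim {X} (T : topology X) : Prop :=
  forall U x, open T U -> U x -> exists C, clopen T C /\ C x /\ forall y, C y -> U y.

Definition hausdorff {X} (T : topology X) : Prop :=
  forall x y, x <> y -> exists U V, open T U /\ open T V /\ U x /\ V y /\
    forall z, ~ (U z /\ V z).

Definition compact {X} (T : topology X) : Prop :=
  forall F : (X -> Prop) -> Prop,
    (forall U, F U -> open T U) ->
    (forall x, exists U, F U /\ U x) ->
    exists l : list (X -> Prop), (forall U, In U l -> F U) /\
      forall x, exists U, In U l /\ U x.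

Definition tychonoff {X} (T : topology X) : Prop :=
  (forall x, closed T (fun y => y = x)) /\
  (forall (F : X -> Prop) x, closed T F -> ~ F x ->
     exists f : X -> R, continuous_R T f /\ (forall y, 0 <= f y <= 1) /\
       f x = 0 /\ forall y, F y -> f y = 1).

Definition embedding {X Y} (TX : topology X) (TY : topology Y) (e : X -> Y) : Prop :=
  continuous TX TY e /\ (forall x x', e x = e x' -> x = x') /\
  forall U, open TX U -> exists V, open TY V /\ forall x, U x <-> V (e x).

Definition dense_image {X Y} (TY : topology Y) (e : X -> Y) : Prop :=
  forall V, open TY V -> (exists y, V y) -> exists x, V (e x).

Definition stone_cech {X Y} (TX : topology X) (TY : topology Y) (e : X -> Y) : Prop :=
  compact TY /\ hausdorff TY /\ embedding TX TY e /\ dense_image TY e /\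
  forall (Z : Type) (TZ : topology Z) (h : X -> Z),
    compact TZ -> hausdorff TZ -> continuous TX TZ h ->
    exists H : Y -> Z, continuous TY TZ H /\ forall x, H (e x) = h x.

(** Cardinals are represented by types; |I| < |K|. *)
Definition card_lt (I K : Type) : Prop :=
  (exists f : I -> K, forall i j, f i = f j -> i = j) /\
  ~ (exists g : K -> I, forall a b, g a = g b -> a = b).

Definition infinite_type (K : Type) : Prop :=
  exists f : nat -> K, forall i j, f i = f j -> i = j.

(** The type tau(U) of [U] is less than |K|: [U] is a union of fewer than
    |K| many clopen subsets of the space (tau(U) being the least such
    cardinal, tau(U) < |K| iff some such family has size < |K|). *)
Definition type_lt {X} (T : topology X) (U : X -> Prop) (K : Type) : Prop :=
  exists (I : Type) (C : I -> X -> Prop),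
    card_lt I K /\ (forall i, clopen T (C i)) /\
    forall x, U x <-> exists i, C i x.

Definition F_kappa_space (K : Type) {X} (T : topology X) : Prop :=
  zero_dim T /\
  forall U, open T U -> type_lt T U K -> C_star_embedded T U.

From Pilot Require Import Defs.
From Stdlib Require Import Reals List Lra Classical ClassicalEpsilon FunctionalExtensionality PropExtensionality.
Open Scope R_scope.

(* Two consequences of the extension property of (Y, e) drive the proof:
   every bounded continuous real function on X extends over Y (map X into
   the compact interval [-M, M]), and every clopen subset of X is the trace
   of a clopen subset of Y (map X into the two-point discrete space).  Add
   the density fact that continuous functions agreeing on e(X) ∩ O agree on
   an open set O, and both directions follow.
   (⇒) If U ⊆ Y is a union of < κ clopens, so is its trace on X; a bounded f
       on U restricts to the trace, extends over X by hypothesis, then over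
       Y, and that extension agrees with f on U by density.
   (⇐) Zero-dimensionality passes to the subspace X.  If U = ⋃ C_i ⊆ X with
       C_i clopen, extend each C_i to a clopen D_i of Y and f|C_i to G_i on
       Y; the G_i agree on overlaps by density and glue to a bounded
       continuous function on ⋃ D_i, an open set of type < κ in Y, hence
       C*-embedded; restricting its extension to X extends f. *)

Lemma open_ext {X} (T : topology X) (U V : X -> Prop) :
  (forall x, U x <-> V x) -> open T U -> open T V.
Proof.
  intros H HU. replace V with U; auto.
  apply functional_extensionality; intro x; apply propositional_extensionality; auto.
Qed.

Lemma open_iunion {X J} (T : topology X) (A : J -> X -> Prop) :
  (forall i, open T (A i)) -> open T (fun x => exists i, A i x).
Proof.
  intros H. apply (open_ext T (fun x => exists W, (exists i, W = A i) /\ W x)).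
  - intros x; split; [intros [W [[i ->] Hx]]; eauto | intros [i Hx]; exists (A i); eauto].
  - apply open_union; intros W [i ->]; auto.
Qed.

Lemma open_const {X} (T : topology X) (P : Prop) : open T (fun _ => P).
Proof.
  destruct (classic P) as [H|H].
  - apply (open_ext T (fun _ => True)); [tauto | apply open_full].
  - apply (open_ext T (fun x => exists i : False, True)).
    + intros x; split; [intros [[] _] | contradiction].
    + apply open_iunion; intros [].
Qed.

Lemma open_by_cases {X} (T : topology X) C A B : clopen T C -> open T A -> open T B ->
  open T (fun x => (C x /\ A x) \/ (~ C x /\ B x)).
Proof.
  intros [HC1 HC2] HA HB.
  apply (open_ext T (fun x => exists b : bool,
           if b then C x /\ A x else ~ C x /\ B x)).
  - intros x; split; [intros [[|] H]; tauto | intros [H|H]; [exists true | exists false]; auto].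
  - apply open_iunion; intros [|]; apply open_inter; auto.
Qed.

Lemma clopen_preimage {X Y} (TX : topology X) (TY : topology Y) (e : X -> Y) C :
  continuous TX TY e -> clopen TY C -> clopen TX (fun x => C (e x)).
Proof.
  intros He [H1 H2]; split; [apply He; auto | apply (He (fun y => ~ C y)); auto].
Qed.

Lemma continuous_R_on_whole {X} (T : topology X) U g :
  continuous_R T g -> continuous_R_on T U g.
Proof. intros Hg W HW. exists (fun x => W (g x)); split; [apply Hg; auto | tauto]. Qed.

Lemma continuous_R_on_sub {X} (T : topology X) (U V : X -> Prop) f :
  (forall x, U x -> V x) -> continuous_R_on T V f -> continuous_R_on T U f.
Proof. intros HUV Hf W HW. destruct (Hf W HW) as [O [HO EO]]; eauto. Qed.

Lemma continuous_R_on_comp {X Y} (TX : topology X) (TY : topology Y) (e : X -> Y) U f :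
  continuous TX TY e -> continuous_R_on TY U f ->
  continuous_R_on TX (fun x => U (e x)) (fun x => f (e x)).
Proof.
  intros He Hf W HW. destruct (Hf W HW) as [O [HO EO]].
  exists (fun x => O (e x)); split; [apply He; auto | intros x Hx; apply EO; auto].
Qed.

Lemma continuous_R_comp {X Y} (TX : topology X) (TY : topology Y) (e : X -> Y) g :
  continuous TX TY e -> continuous_R TY g -> continuous_R TX (fun x => g (e x)).
Proof. intros He Hg W HW. apply (He (fun y => W (g y))), Hg, HW. Qed.

Lemma continuous_extend_by_zero {X} (T : topology X) C f :
  clopen T C -> continuous_R_on T C f ->
  continuous_R T (fun x => if excluded_middle_informative (C x) then f x else 0).
Proof.
  intros HC Hf W HW. destruct (Hf W HW) as [O [HO EO]].
  apply (open_ext T (fun x => (C x /\ O x) \/ (~ C x /\ W 0))).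
  - intros x; destruct excluded_middle_informative as [Hx|Hx]; [rewrite (EO x Hx)|]; tauto.
  - apply open_by_cases; auto. apply open_const.
Qed.

Lemma bound_nonneg {X} (U : X -> Prop) (f : X -> R) :
  (exists M, forall x, U x -> Rabs (f x) <= M) ->
  exists M, 0 <= M /\ forall x, U x -> Rabs (f x) <= M.
Proof.
  intros [M HM]. exists (Rmax 0 M); split; [apply Rmax_l|].
  intros x Hx; eapply Rle_trans; [apply HM, Hx | apply Rmax_r].
Qed.

Lemma eq_on_open_of_dense {X Y} (TY : topology Y) (e : X -> Y) (O : Y -> Prop) (g1 g2 : Y -> R) :
  dense_image TY e -> open TY O -> continuous_R_on TY O g1 -> continuous_R_on TY O g2 ->
  (forall x, O (e x) -> g1 (e x) = g2 (e x)) -> forall y, O y -> g1 y = g2 y.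
Proof.
  intros Hd HO H1 H2 Hag y Hy.
  destruct (Req_dec (g1 y) (g2 y)) as [E|NE]; auto. exfalso.
  assert (Hpos : 0 < Rabs (g1 y - g2 y) / 2).
  { assert (0 < Rabs (g1 y - g2 y)) by (apply Rabs_pos_lt; lra). lra. }
  set (d := mkposreal _ Hpos).
  assert (Hcenter : forall a, disc a d a).
  { intros a; unfold disc; rewrite Rminus_diag, Rabs_R0; apply cond_pos. }
  destruct (H1 (disc (g1 y) d) (disc_P1 _ _)) as [O1 [HO1 E1]].
  destruct (H2 (disc (g2 y) d) (disc_P1 _ _)) as [O2 [HO2 E2]].
  destruct (Hd (fun z => (O z /\ O1 z) /\ O2 z)) as [x [[Hx Hx1] Hx2]].
  - repeat apply open_inter; auto.
  - exists y. split; [split|]; auto; [apply E1 | apply E2]; auto.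
  - apply E1 in Hx1; auto. apply E2 in Hx2; auto. rewrite Hag in Hx1 by auto.
    unfold disc, d in *; simpl in *. revert Hx1 Hx2 NE.
    generalize (g1 y) (g2 y) (g2 (e x)). intros a b c.
    unfold Rabs; repeat destruct Rcase_abs; lra.
Qed.

Lemma glue_continuous {Y I} (T : topology Y) (D : I -> Y -> Prop) (G : I -> Y -> R) :
  (forall i, open T (D i)) -> (forall i, continuous_R T (G i)) ->
  (forall i j y, D i y -> D j y -> G i y = G j y) ->
  exists F : Y -> R, continuous_R_on T (fun y => exists i, D i y) F /\
    forall i y, D i y -> F y = G i y.
Proof.
  intros HD HG Hagr.
  set (F := fun y => match excluded_middle_informative (exists i, D i y) with
                     | left H => G (proj1_sig (constructive_indefinite_description _ H)) y
                     | right _ => 0 end).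
  assert (HF : forall i y, D i y -> F y = G i y).
  { intros i y Hy. unfold F. destruct excluded_middle_informative as [H|H]; [|exfalso; eauto].
    apply Hagr; auto. exact (proj2_sig (constructive_indefinite_description _ H)). }
  exists F; split; auto.
  intros W HW. exists (fun y => exists i, D i y /\ W (G i y)). split.
  - apply open_iunion; intros i; apply open_inter; [apply HD | apply HG; auto].
  - intros y [i Hi]. rewrite (HF i y Hi). split; [eauto|].
    intros [j [Hj Hw]]. rewrite (Hagr i j y Hi Hj); auto.
Qed.

Definition clamp (M r : R) : R := Rmax (- M) (Rmin M r).

Lemma clamp_lipschitz M r s : 0 <= M -> Rabs (clamp M s - clamp M r) <= Rabs (s - r).
Proof.
  intros HM. unfold clamp, Rmax, Rmin.
  repeat destruct Rle_dec; unfold Rabs; repeat destruct Rcase_abs; lra.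
Qed.

Lemma clamp_id M r : Rabs r <= M -> clamp M r = r.
Proof.
  intros H. unfold clamp, Rmax, Rmin. revert H.
  repeat destruct Rle_dec; unfold Rabs; repeat destruct Rcase_abs; lra.
Qed.

Lemma clamp_bound M r : 0 <= M -> - M <= clamp M r <= M.
Proof. intros HM. unfold clamp, Rmax, Rmin. repeat destruct Rle_dec; lra. Qed.

Lemma clamp_open M W : 0 <= M -> open_set W -> open_set (fun r => W (clamp M r)).
Proof.
  intros HM HW r Hr. destruct (HW _ Hr) as [d Hd].
  exists d. intros s Hs. apply Hd. unfold disc in *.
  eapply Rle_lt_trans; [apply clamp_lipschitz; auto | auto].
Qed.

(** * Two compact Hausdorff spaces: the interval [[-M, M]] and [bool] *)

Section Interval.
Variable M : R.
Hypothesis HM : 0 <= M.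

Definition interval := { r : R | - M <= r <= M }.

Definition interval_open (U : interval -> Prop) : Prop :=
  exists O, open_set O /\ forall z, U z <-> O (proj1_sig z).

Lemma interval_open_full : interval_open (fun _ => True).
Proof. exists (fun _ => True); split; [apply open_set_P5 | tauto]. Qed.

Lemma interval_open_inter U V :
  interval_open U -> interval_open V -> interval_open (fun x => U x /\ V x).
Proof.
  intros [O1 [H1 E1]] [O2 [H2 E2]].
  exists (intersection_domain O1 O2); split; [apply open_set_P3; auto|].
  intros z; unfold intersection_domain; rewrite E1, E2; tauto.
Qed.

Lemma interval_open_union (F : (interval -> Prop) -> Prop) :
  (forall U, F U -> interval_open U) -> interval_open (fun x => exists U, F U /\ U x).
Proof.
  intros HF.
  exists (fun r => exists U O, F U /\ open_set O /\ (forall z, U z <-> O (proj1_sig z)) /\ O r).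
  split.
  - intros r [U [O [HU [HO [EO Hr]]]]]. destruct (HO r Hr) as [d Hd].
    exists d. intros s Hs. exists U, O; split; [|split; [|split]]; auto.
  - intros z; split.
    + intros [U [HU Hz]]. destruct (HF U HU) as [O [HO EO]].
      exists U, O; split; [|split; [|split]]; auto. apply EO, Hz.
    + intros [U [O [HU [HO [EO Hr]]]]]. exists U; split; auto. apply EO; auto.
Qed.

Definition interval_topology : topology interval :=
  Topology interval interval_open interval_open_full interval_open_inter interval_open_union.

Definition clamp_into (r : R) : interval := exist _ (clamp M r) (clamp_bound M r HM).

Lemma interval_hausdorff : hausdorff interval_topology.
Proof.
  intros [a Ha] [b Hb] Hne.
  assert (Hab : a <> b) by (intro; subst; apply Hne; f_equal; apply proof_irrelevance).
  assert (Hpos : 0 < Rabs (a - b) / 2).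
  { assert (0 < Rabs (a - b)) by (apply Rabs_pos_lt; lra). lra. }
  set (d := mkposreal _ Hpos).
  assert (Hcenter : forall c, disc c d c).
  { intros c; unfold disc; rewrite Rminus_diag, Rabs_R0; apply cond_pos. }
  exists (fun z => disc a d (proj1_sig z)), (fun z => disc b d (proj1_sig z)).
  repeat split; simpl; auto.
  - exists (disc a d); split; [apply disc_P1 | tauto].
  - exists (disc b d); split; [apply disc_P1 | tauto].
  - intros [c Hc] [H1 H2]. unfold disc, d in *; simpl in *. revert H1 H2 Hab.
    unfold Rabs; repeat destruct Rcase_abs; lra.
Qed.

(** Heine–Borel for [[-M, M]], transported from the Stdlib statement
    [compact_P3] about families of open sets of reals. *)
Lemma interval_compact : Defs.compact interval_topology.
Proof.
  intros F HF Hcov.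
  assert (ch : forall z : interval, { p : (interval -> Prop) * (R -> Prop) |
     F (fst p) /\ fst p z /\ open_set (snd p) /\ forall w, fst p w <-> snd p (proj1_sig w) }).
  { intros z. apply constructive_indefinite_description.
    destruct (Hcov z) as [U [HU Hz]]. destruct (HF U HU) as [O [HO EO]].
    exists (U, O); simpl; auto. }
  set (cover_of := fun x => proj1_sig (ch (clamp_into x))).
  set (fam_f := fun x y => (- M <= x <= M) /\ snd (cover_of x) y).
  assert (Hcond : forall x, (exists y, fam_f x y) -> - M <= x <= M).
  { intros x [y [Hx _]]; auto. }
  set (fam := mkfamily (fun x => - M <= x <= M) fam_f Hcond).
  destruct (compact_P3 (- M) M fam) as [D [Hc [l Hl]]].
  - split.
    + intros x Hx. exists x. unfold fam; simpl; unfold fam_f. split; auto.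
      pose proof (proj2_sig (ch (clamp_into x))) as [_ [Hp [_ Ep]]].
      apply Ep in Hp. simpl in Hp. rewrite clamp_id in Hp; auto.
      unfold Rabs; destruct Rcase_abs; lra.
    + intros x r [Hx Hr].
      pose proof (proj2_sig (ch (clamp_into x))) as [_ [_ [Hp _]]].
      destruct (Hp r Hr) as [d Hd]. exists d. intros s Hs. split; auto.
  - exists (map (fun x => fst (cover_of x)) l). split.
    + intros U HU. apply in_map_iff in HU. destruct HU as [x [<- _]].
      exact (proj1 (proj2_sig (ch (clamp_into x)))).
    + intros [r Hr]. destruct (Hc r Hr) as [y [[Hyi Hy] HDy]].
      exists (fst (cover_of y)). split.
      * apply in_map_iff. exists y; split; auto. apply Hl. split; auto.
      * pose proof (proj2_sig (ch (clamp_into y))) as [_ [_ [_ Ep]]]. apply Ep; auto.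
Qed.

End Interval.

Definition bool_topology : topology bool :=
  Topology bool (fun _ => True) I (fun _ _ _ _ => I) (fun _ _ => I).

Lemma bool_hausdorff : hausdorff bool_topology.
Proof.
  intros x y H. exists (fun z => z = x), (fun z => z = y). simpl.
  repeat split; auto. intros z [-> ->]; auto.
Qed.

Lemma bool_compact : Defs.compact bool_topology.
Proof.
  intros F _ Hcov. destruct (Hcov true) as [U1 [H1 E1]]. destruct (Hcov false) as [U2 [H2 E2]].
  exists (U1 :: U2 :: nil). split.
  - intros U [<- | [<- | []]]; auto.
  - intros [|]; [exists U1 | exists U2]; simpl; auto.
Qed.

(** * Extensions over a Stone–Čech compactification *)

Section StoneCech.
Variables (X Y : Type) (TX : topology X) (TY : topology Y) (e : X -> Y).
Hypothesis hbeta : stone_cech TX TY e.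

Let He : continuous TX TY e := proj1 (proj1 (proj2 (proj2 hbeta))).
Let Hdense : dense_image TY e := proj1 (proj2 (proj2 (proj2 hbeta))).
Let Hextend : forall (Z : Type) (TZ : topology Z) (h : X -> Z),
    Defs.compact TZ -> hausdorff TZ -> continuous TX TZ h ->
    exists H : Y -> Z, continuous TY TZ H /\ forall x, H (e x) = h x :=
  proj2 (proj2 (proj2 (proj2 hbeta))).

Lemma extend_bounded (M : R) (g : X -> R) :
  0 <= M -> continuous_R TX g ->
  exists G : Y -> R, continuous_R TY G /\ (forall x, G (e x) = clamp M (g x)) /\
    (forall y, Rabs (G y) <= M).
Proof.
  intros HM Hg.
  destruct (Hextend _ (interval_topology M) (fun x => clamp_into M HM (g x))
              (interval_compact M HM) (interval_hausdorff M))
    as [H [HH EH]].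
  - intros V [O [HO EO]]. apply (open_ext TX (fun x => O (clamp M (g x)))).
    + intros x; rewrite EO; simpl; tauto.
    + apply (Hg (fun r => O (clamp M r))), clamp_open; auto.
  - exists (fun y => proj1_sig (H y)). repeat split.
    + intros W HW. apply (HH (fun z => W (proj1_sig z))). exists W; split; auto; tauto.
    + intros x; rewrite EH; reflexivity.
    + intros y; destruct (H y) as [r Hr]; simpl. unfold Rabs; destruct Rcase_abs; lra.
Qed.

Lemma extend_clopen C :
  clopen TX C -> exists D, clopen TY D /\ forall x, D (e x) <-> C x.
Proof.
  intros HC.
  set (h := fun x => if excluded_middle_informative (C x) then true else false).
  destruct (Hextend _ bool_topology h bool_compact bool_hausdorff) as [H [HH EH]].
  - intros V _. apply (open_ext TX (fun x => (C x /\ V true) \/ (~ C x /\ V false))).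
    + intros x; unfold h; destruct excluded_middle_informative; tauto.
    + apply open_by_cases; auto; apply open_const.
  - exists (fun y => H y = true). repeat split.
    + apply (HH (fun b => b = true)); exact I.
    + apply (HH (fun b => ~ b = true)); exact I.
    + rewrite EH; unfold h; destruct excluded_middle_informative; congruence.
    + rewrite EH; unfold h; destruct excluded_middle_informative; congruence.
Qed.

Lemma extend_from_clopen C f M :
  0 <= M -> clopen TX C -> continuous_R_on TX C f -> (forall x, C x -> Rabs (f x) <= M) ->
  exists G : Y -> R, continuous_R TY G /\ (forall x, C x -> G (e x) = f x) /\
    forall y, Rabs (G y) <= M.
Proof.
  intros HM HC Hf HfM.
  destruct (extend_bounded M _ HM (continuous_extend_by_zero TX C f HC Hf))
    as [G [HG [EG HGM]]].
  exists G; repeat split; auto.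
  intros x Hx. rewrite EG. destruct excluded_middle_informative; [|contradiction].
  apply clamp_id, HfM, Hx.
Qed.

(** An open [U ⊆ Y] whose trace on [X] is C*-embedded is C*-embedded:
    extend over [X], then over [Y], and conclude by density. *)
Lemma C_star_embedded_of_trace U :
  open TY U -> C_star_embedded TX (fun x => U (e x)) -> C_star_embedded TY U.
Proof.
  intros HU Hce f Hf Hbound.
  destruct (bound_nonneg U f Hbound) as [M [HM HfM]].
  destruct (Hce (fun x => f (e x))) as [g [Hg Hgf]].
  - apply (continuous_R_on_comp TX TY); auto.
  - exists M; intros x Hx; auto.
  - destruct (extend_bounded M g HM Hg) as [G [HG [EG _]]].
    exists G; split; auto.
    apply (eq_on_open_of_dense TY e U G f Hdense HU (continuous_R_on_whole TY U G HG) Hf).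
    intros x Hx. rewrite EG, Hgf by auto. apply clamp_id; auto.
Qed.

Lemma C_star_embedded_descends (K : Type) U :
  (forall V, open TY V -> type_lt TY V K -> C_star_embedded TY V) ->
  type_lt TX U K -> C_star_embedded TX U.
Proof.
  intros HFY [I [C [HI [HC HUC]]]] f Hf Hbound.
  destruct (bound_nonneg U f Hbound) as [M [HM HfM]].
  assert (HCU : forall i x, C i x -> U x) by (intros i x Hx; apply HUC; eauto).
  destruct (choice (fun i D => clopen TY D /\ forall x, D (e x) <-> C i x))
    as [D HD]; [intros i; apply extend_clopen, HC|].
  destruct (choice (fun i G => continuous_R TY G /\ (forall x, C i x -> G (e x) = f x) /\
                               forall y, Rabs (G y) <= M)) as [G HG].
  { intros i. apply extend_from_clopen; auto.
    - apply (continuous_R_on_sub TX (C i) U); eauto.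
    - intros x Hx; apply HfM; eauto. }
  assert (Hagree : forall i j y, D i y -> D j y -> G i y = G j y).
  { intros i j y Hi Hj.
    apply (eq_on_open_of_dense TY e (fun y => D i y /\ D j y) (G i) (G j) Hdense);
      try apply continuous_R_on_whole, HG; auto.
    - apply open_inter; apply HD.
    - intros x [Hxi Hxj]. apply HD in Hxi; apply HD in Hxj.
      rewrite (proj1 (proj2 (HG i)) x Hxi), (proj1 (proj2 (HG j)) x Hxj); auto. }
  destruct (glue_continuous TY D G (fun i => proj1 (proj1 (HD i))) (fun i => proj1 (HG i)) Hagree)
    as [F [HF EF]].
  destruct (HFY (fun y => exists i, D i y) (open_iunion TY D (fun i => proj1 (proj1 (HD i))))
              (ex_intro _ I (ex_intro _ D (conj HI (conj (fun i => proj1 (HD i))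
                 (fun y => iff_refl _))))) F HF) as [Gf [HGf EGf]].
  - exists M. intros y [i Hi]. rewrite (EF i y Hi). apply HG.
  - exists (fun x => Gf (e x)). split; [apply (continuous_R_comp TX TY); auto|].
    intros x Hx. destruct (proj1 (HUC x) Hx) as [i Hi].
    assert (HDi : D i (e x)) by (apply HD; auto).
    rewrite EGf by eauto. rewrite (EF i _ HDi). apply HG; auto.
Qed.

End StoneCech.

Lemma zero_dim_subspace {X Y} (TX : topology X) (TY : topology Y) (e : X -> Y) :
  embedding TX TY e -> zero_dim TY -> zero_dim TX.
Proof.
  intros [He [_ Hemb]] HzY U x HU Hx. destruct (Hemb U HU) as [V [HV EV]].
  destruct (HzY V (e x) HV) as [C [HC [Cx CV]]]; [apply EV; auto|].
  exists (fun z => C (e z)). repeat split; auto.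
  - apply (clopen_preimage TX TY e C); auto.
  - apply (clopen_preimage TX TY e C); auto.
  - intros y Hy; apply EV; auto.
Qed.

Lemma type_lt_preimage {X Y} (TX : topology X) (TY : topology Y) (e : X -> Y) (K : Type) U :
  continuous TX TY e -> type_lt TY U K -> type_lt TX (fun x => U (e x)) K.
Proof.
  intros He [I [C [HI [HC HUC]]]].
  exists I, (fun i x => C i (e x)). split; [exact HI | split].
  - intros i; apply (clopen_preimage TX TY); auto.
  - intros x; apply HUC.
Qed.

Theorem theorem5p1 (K : Type) (hK : infinite_type K)
  (X : Type) (TX : topology X) (Y : Type) (TY : topology Y) (e : X -> Y)
  (hX : tychonoff TX) (hbeta : stone_cech TX TY e) (hsz : zero_dim TY) :
  F_kappa_space K TX <-> F_kappa_space K TY.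
Proof.
  pose proof (proj1 (proj2 (proj2 hbeta))) as Hemb.
  split.
  - intros [_ HFX]. split; auto.
    intros U HU HtU. apply (C_star_embedded_of_trace X Y TX TY e hbeta U HU).
    apply HFX; [apply (proj1 Hemb), HU | apply (type_lt_preimage TX TY); auto; apply Hemb].
  - intros [_ HFY]. split; [apply (zero_dim_subspace TX TY e Hemb hsz)|].
    intros U _ HtU. apply (C_star_embedded_descends X Y TX TY e hbeta K U HFY HtU).
Qed.
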